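(* Let $(q,E)$ be an annotated CQ (a CQ $q$ together with a collection $E=(E^+,E^-)$ of labeled examples of the same arity as $q$), and let $q'$ be a CQ. Then: (1) $q'$ is a $\preceq^{\mathrm{cod}}$-generalization for $(q,E)$ if and only if $q'$ is a containment-based generalization for $(q,E)$; (2) $q'$ is a $\preceq^{\mathrm{cod}}$-specialization for $(q,E)$ if and only if $q'$ is a containment-based specialization for $(q,E)$.
   Context: A schema is a finite set of relation symbols with arities; a database instance is a finite set of facts $R(a_1,\dots,a_n)$. A data example of arity $k$ is a pair $(I,\mathbf a)$ with $I$ an instance and $\mathbf a$ a $k$-tuple of values of $I$. A $k$-ary conjunctive query (CQ) is $q(x_1,\dots,x_k)\text{ :- }\alpha_1,\dots,\alpha_n$ with relational atoms $\alpha_i$ without constants, where every answer variable occurs in some atom; $q(I)$ is its usual set of answers. For a query $q$, $[\![q]\!]$ is the set of data examples $(I,\mathbf a)$ with $\mathbf a\in q(I)$. $q_1\subseteq q_2$ means $q_1(I)\subseteq q_2(I)$ for all instances $I$; $q_1\equiv q_2$ means containment both ways; $q_1\subsetneq q_2$ means $q_1\subseteq q_2$ and $q_1\not\equiv q_2$. A collection of labeled examples is $E=(E^+,E^-)$ (sets of positive and negative data examples); $q$ fits $E$ if $E^+\subseteq [\![q]\!]$ and $E^-\cap[\![q]\!]=\emptyset$. Candidate queries are CQs using only relation symbols occurring in $q$ or $E$. Containment of difference: $q_1\preceq^{\mathrm{cod}}_q q_2$ iff $[\![q]\!]\oplus[\![q_1]\!]\subseteq[\![q]\!]\oplus[\![q_2]\!]$,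 where $\oplus$ is symmetric difference; $q_1\prec_q q_2$ means $q_1\preceq_q q_2$ and not $q_2\preceq_q q_1$. For a family of pre-orders $\preceq=(\preceq_q)_q$: a $\preceq$-generalization for $(q,E)$ is a CQ $q'$ with (i) $q'$ fits $E$ and $q\subseteq q'$, and (ii) no CQ $q''$ satisfying (i) has $q''\prec_q q'$; a $\preceq$-specialization is defined the same way with $q'\subseteq q$ (resp. $q''\subseteq q$) in place of $q\subseteq q'$. A containment-based generalization for $(q,E)$ is a CQ $q'$ fitting $E$ with $q\subseteq q'$ such that there is no CQ $q''$ fitting $E$ with $q\subseteq q''\subsetneq q'$. A containment-based specialization for $(q,E)$ is a CQ $q'$ fitting $E$ with $q'\subseteq q$ such that there is no CQ $q''$ fitting $E$ with $q'\subsetneq q''\subseteq q$. *)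

From Stdlib Require Import List.
Import ListNotations.

Record schema := Schema {
  sym : Type;
  arity : sym -> nat;
  sym_finite : exists l : list sym, forall s, In s l
}.

Definition value := nat.
Definition var := nat.

Section CQ.
Variable S : schema.

Definition fact := (sym S * list value)%type.
Definition instance := list fact.

Definition wf_fact (f : fact) : Prop := length (snd f) = arity S (fst f).
Definition wf_instance (I : instance) : Prop := forall f, In f I -> wf_fact f.

Definition in_adom (I : instance) (a : value) : Prop :=
  exists f, In f I /\ In a (snd f).

Definition data_example := (instance * list value)%type.
Definition wf_example (D : data_example) : Prop :=
  wf_instance (fst D) /\ forall a, In a (snd D) -> in_adom (fst D) a.

(** Conjunctive queries: answer variables [cq_head] (arity = its length)
    and a list of relational atoms [cq_body] (no constants). *)
Definition atom := (sym S * list var)%type.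
Record cq := CQ { cq_head : list var; cq_body : list atom }.

Definition cq_arity (q : cq) : nat := length (cq_head q).

Definition wf_cq (q : cq) : Prop :=
  (forall at0, In at0 (cq_body q) -> length (snd at0) = arity S (fst at0)) /\
  (forall x, In x (cq_head q) -> exists at0, In at0 (cq_body q) /\ In x (snd at0)).

Definition answer (q : cq) (I : instance) (a : list value) : Prop :=
  exists h : var -> value,
    (forall at0, In at0 (cq_body q) -> In (fst at0, map h (snd at0)) I) /\
    map h (cq_head q) = a.

Definition sem (q : cq) (D : data_example) : Prop :=
  wf_example D /\ answer q (fst D) (snd D).

Definition contained (q1 q2 : cq) : Prop :=
  forall I a, wf_instance I -> answer q1 I a -> answer q2 I a.
Definition equivalent (q1 q2 : cq) : Prop := contained q1 q2 /\ contained q2 q1.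
Definition strictly_contained (q1 q2 : cq) : Prop :=
  contained q1 q2 /\ ~ equivalent q1 q2.

Record examples := Examples { pos : list data_example; neg : list data_example }.

Definition fits (q : cq) (E : examples) : Prop :=
  (forall D, In D (pos E) -> sem q D) /\
  (forall D, In D (neg E) -> ~ sem q D).

Definition annotated (q : cq) (E : examples) : Prop :=
  wf_cq q /\
  forall D, In D (pos E) \/ In D (neg E) ->
    wf_example D /\ length (snd D) = cq_arity q.

Definition sym_in_E (E : examples) (R : sym S) : Prop :=
  exists D f, (In D (pos E) \/ In D (neg E)) /\ In f (fst D) /\ fst f = R.
Definition candidate (q : cq) (E : examples) (q' : cq) : Prop :=
  wf_cq q' /\
  forall at0, In at0 (cq_body q') ->
    (exists at1, In at1 (cq_body q) /\ fst at1 = fst at0) \/ sym_in_E E (fst at0).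

Definition symdiff (q q1 : cq) (D : data_example) : Prop :=
  (sem q D /\ ~ sem q1 D) \/ (sem q1 D /\ ~ sem q D).
Definition cod_le (q q1 q2 : cq) : Prop :=
  forall D, symdiff q q1 D -> symdiff q q2 D.

Definition strict (le : cq -> cq -> cq -> Prop) (q q1 q2 : cq) : Prop :=
  le q q1 q2 /\ ~ le q q2 q1.

Definition pre_generalization (le : cq -> cq -> cq -> Prop)
    (q : cq) (E : examples) (q' : cq) : Prop :=
  (candidate q E q' /\ fits q' E /\ contained q q') /\
  ~ (exists q'', (candidate q E q'' /\ fits q'' E /\ contained q q'') /\
                 strict le q q'' q').

Definition pre_specialization (le : cq -> cq -> cq -> Prop)
    (q : cq) (E : examples) (q' : cq) : Prop :=
  (candidate q E q' /\ fits q' E /\ contained q' q) /\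
  ~ (exists q'', (candidate q E q'' /\ fits q'' E /\ contained q'' q) /\
                 strict le q q'' q').

Definition cont_generalization (q : cq) (E : examples) (q' : cq) : Prop :=
  (candidate q E q' /\ fits q' E /\ contained q q') /\
  ~ (exists q'', candidate q E q'' /\ fits q'' E /\
                 contained q q'' /\ strictly_contained q'' q').

Definition cont_specialization (q : cq) (E : examples) (q' : cq) : Prop :=
  (candidate q E q' /\ fits q' E /\ contained q' q) /\
  ~ (exists q'', candidate q E q'' /\ fits q'' E /\
                 strictly_contained q' q'' /\ contained q'' q).

End CQ.

(** Among queries that all contain [q], the symmetric difference with [q]
    is just the set of extra answers, so comparing symmetric differences is
    comparing answer sets, i.e. containment; among queries contained in [q]
    it is the set of lost answers, and the order is reversed. In both cases
    strict [cod_le] coincides with strict containment. Passing between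
    containment and inclusion of [sem] needs well-formedness, so that every
    answer tuple lies in the active domain. *)

From Stdlib Require Import List Classical.

Section SymmetricDifference.

Variables (T : Type) (A B C : T -> Prop).

Lemma symdiff_incl_above :
  (forall x, A x -> B x) -> (forall x, A x -> C x) ->
  (forall x, (A x /\ ~ B x) \/ (B x /\ ~ A x) -> (A x /\ ~ C x) \/ (C x /\ ~ A x))
  <-> (forall x, B x -> C x).
Proof.
  intros HAB HAC; split.
  - intros Hsd x HB.
    destruct (classic (A x)) as [HA | HnA]; [auto |].
    destruct (Hsd x (or_intror (conj HB HnA))) as [[HA _] | [HC _]]; tauto.
  - intros HBC x [[HA HnB] | [HB HnA]].
    + exfalso; auto.
    + right; auto.
Qed.

Lemma symdiff_incl_below :
  (forall x, B x -> A x) -> (forall x, C x -> A x) ->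
  (forall x, (A x /\ ~ B x) \/ (B x /\ ~ A x) -> (A x /\ ~ C x) \/ (C x /\ ~ A x))
  <-> (forall x, C x -> B x).
Proof.
  intros HBA HCA; split.
  - intros Hsd x HC.
    destruct (classic (B x)) as [HB | HnB]; [auto |].
    destruct (Hsd x (or_introl (conj (HCA x HC) HnB))) as [[_ HnC] | [_ HnA]];
      exfalso; auto.
  - intros HCB x [[HA HnB] | [HB HnA]].
    + left; auto.
    + exfalso; auto.
Qed.

End SymmetricDifference.

Section Containment.

Variable S : schema.
Implicit Types q : cq S.

Lemma sem_contained q1 q2 D :
  contained S q1 q2 -> sem S q1 D -> sem S q2 D.
Proof.
  intros Hc [Hwf Ha]; split; [exact Hwf |].
  apply Hc; [apply Hwf | exact Ha].
Qed.

Lemma answer_in_adom q I a x :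
  wf_cq S q -> answer S q I a -> In x a -> in_adom S I x.
Proof.
  intros [_ Hhead] [h [Hbody <-]] Hx.
  apply in_map_iff in Hx as [v [<- Hv]].
  destruct (Hhead v Hv) as [at0 [Hat Hv_at]].
  exists (fst at0, map h (snd at0)); split; [exact (Hbody at0 Hat) |].
  apply in_map, Hv_at.
Qed.

Lemma contained_iff_sem_incl q1 q2 :
  wf_cq S q1 ->
  contained S q1 q2 <-> (forall D, sem S q1 D -> sem S q2 D).
Proof.
  intros Hwf; split; [intros Hc D; exact (sem_contained q1 q2 D Hc) |].
  intros Hsem I a HI Ha.
  assert (HD : sem S q1 (I, a)).
  { split; [split; [exact HI |] |]; [| exact Ha].
    intros x Hx; exact (answer_in_adom q1 I a x Hwf Ha Hx). }
  exact (proj2 (Hsem _ HD)).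
Qed.

Lemma cod_le_above q q1 q2 :
  wf_cq S q1 -> contained S q q1 -> contained S q q2 ->
  cod_le S q q1 q2 <-> contained S q1 q2.
Proof.
  intros Hwf1 H1 H2; rewrite contained_iff_sem_incl by exact Hwf1.
  apply symdiff_incl_above; intros D; apply sem_contained; assumption.
Qed.

Lemma cod_le_below q q1 q2 :
  wf_cq S q2 -> contained S q1 q -> contained S q2 q ->
  cod_le S q q1 q2 <-> contained S q2 q1.
Proof.
  intros Hwf2 H1 H2; rewrite contained_iff_sem_incl by exact Hwf2.
  apply symdiff_incl_below; intros D; apply sem_contained; assumption.
Qed.

Lemma strict_cod_le_above q q1 q2 :
  wf_cq S q1 -> wf_cq S q2 -> contained S q q1 -> contained S q q2 ->
  strict S (cod_le S) q q1 q2 <-> strictly_contained S q1 q2.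
Proof.
  intros Hwf1 Hwf2 H1 H2.
  unfold strict, strictly_contained, equivalent.
  rewrite (cod_le_above q q1 q2), (cod_le_above q q2 q1) by assumption.
  tauto.
Qed.

Lemma strict_cod_le_below q q1 q2 :
  wf_cq S q1 -> wf_cq S q2 -> contained S q1 q -> contained S q2 q ->
  strict S (cod_le S) q q1 q2 <-> strictly_contained S q2 q1.
Proof.
  intros Hwf1 Hwf2 H1 H2.
  unfold strict, strictly_contained, equivalent.
  rewrite (cod_le_below q q1 q2), (cod_le_below q q2 q1) by assumption.
  tauto.
Qed.

Variables (q : cq S) (E : examples S) (q' : cq S).
Hypothesis wf_q' : wf_cq S q'.

Lemma cod_generalization_iff :
  pre_generalization S (cod_le S) q E q' <-> cont_generalization S q E q'.
Proof.
  unfold pre_generalization, cont_generalization.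
  split; intros [[Hc [Hf Hqq']] Hmin]; (split; [tauto |]);
    intros [q'' Hq'']; apply Hmin; exists q''.
  - destruct Hq'' as (Hc'' & Hf'' & Hqq'' & Hlt).
    rewrite strict_cod_le_above by (exact (proj1 Hc'') || assumption).
    tauto.
  - destruct Hq'' as [(Hc'' & Hf'' & Hqq'') Hlt].
    rewrite strict_cod_le_above in Hlt by (exact (proj1 Hc'') || assumption).
    tauto.
Qed.

Lemma cod_specialization_iff :
  pre_specialization S (cod_le S) q E q' <-> cont_specialization S q E q'.
Proof.
  unfold pre_specialization, cont_specialization.
  split; intros [[Hc [Hf Hq'q]] Hmin]; (split; [tauto |]);
    intros [q'' Hq'']; apply Hmin; exists q''.
  - destruct Hq'' as (Hc'' & Hf'' & Hlt & Hq''q).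
    rewrite strict_cod_le_below by (exact (proj1 Hc'') || assumption).
    tauto.
  - destruct Hq'' as [(Hc'' & Hf'' & Hq''q) Hlt].
    rewrite strict_cod_le_below in Hlt by (exact (proj1 Hc'') || assumption).
    tauto.
Qed.

End Containment.

Theorem proposition6 (S : schema) (q : cq S) (E : examples S) (q' : cq S) :
  annotated S q E -> wf_cq S q' ->
  (pre_generalization S (cod_le S) q E q' <-> cont_generalization S q E q') /\
  (pre_specialization S (cod_le S) q E q' <-> cont_specialization S q E q').
Proof.
  intros _ Hwf'.
  split; [apply cod_generalization_iff | apply cod_specialization_iff]; exact Hwf'.
Qed.
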